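(* (Reliability of ensemble-based SpikeCP with p-variable merging.) Let $(\mathbf{x},c),(\mathbf{x}[1],c[1]),\dots,(\mathbf{x}[n],c[n])$ be i.i.d. pairs (input time series, label in $\{1,\dots,C\}$). Let $s^1,\dots,s^K$ be $K$ fixed loss functions (chosen independently of these data), $s^k_{c'}(\mathbf{x}^t)\in\mathbb{R}$. Fix a set of checkpoints $\mathcal{T}_s\subseteq\{1,\dots,T\}$ with $T\in\mathcal{T}_s$, a target accuracy $p_{\rm targ}\in(0,1)$, a set-size threshold $I_{\rm th}$, and set $\alpha=(1-p_{\rm targ})/|\mathcal{T}_s|$. For each $t\in\mathcal{T}_s$, $k$ and label $c'$ define $$p^k_{c'}(\mathbf{x}^t)=\frac{1+\sum_{i=1}^{n}\mathbb{1}\big(s^k_{c'}(\mathbf{x}^t)\le s^k_{c[i]}(\mathbf{x}^t[i])\big)}{n+1},\qquad p_{c'}(\mathbf{x}^t)=F\big(p^1_{c'}(\mathbf{x}^t),\dots,p^K_{c'}(\mathbf{x}^t)\big),$$ where $F$ is any p-merging function, and $\Gamma(\mathbf{x}^t)=\{c'\in\{1,\dots,C\}: p_{c'}(\mathbf{x}^t)>\alpha\}$. Let $T_s(\mathbf{x})=\min\{t\in\mathcal{T}_s: |\Gamma(\mathbf{x}^t)|\le I_{\rm th}\}$ if this set is nonempty and $T_s(\mathbf{x})=T$ otherwise, and output $\Gamma(\mathbf{x}):=\Gamma(\mathbf{x}^{T_s(\mathbf{x})})$. Then $\Pr\big(c\in\Gamma(\mathbf{x})\big)\ge p_{\rm targ}$,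 where the probability is over the test pair and the calibration data.
   Context: $\mathbf{x}^t=(\mathbf{x}_1,\dots,\mathbf{x}_t)$ denotes the prefix up to time $t$ of the time series $\mathbf{x}$. A function $F:[0,1]^K\to[0,\infty)$ is a p-merging function if for any random variables $P^1,\dots,P^K$ (with arbitrary dependence) each satisfying $\Pr(P^k\le\alpha')\le\alpha'$ for all $\alpha'\in(0,1)$, one has $\Pr(F(P^1,\dots,P^K)\le\alpha')\le\alpha'$ for all $\alpha'\in(0,1)$. Examples: $F(p^1,\dots,p^K)=K\min_k p^k$, $F=\max_k p^k$, and more generally $F(p^1,\dots,p^K)=a_r\big(\frac1K\sum_k (p^k)^r\big)^{1/r}$ with suitable constants $a_r$ (e.g. $a_r=K^{1/r}$ for $r\ge K-1$). In the paper the $s^k$ are log-losses of $K$ pre-trained spiking neural networks forming an ensemble (deep ensemble or samples from a variational posterior drawn independently of the data). *)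

From HB Require Import structures.
From mathcomp Require Import all_boot all_order all_algebra.
From mathcomp Require Import all_classical all_reals all_analysis.
Set Implicit Arguments. Unset Strict Implicit. Unset Printing Implicit Defensive.
Import Order.TTheory GRing.Theory Num.Theory.
Local Open Scope classical_set_scope.
Local Open Scope ring_scope.

Definition is_pmerging (R : realType) (K : nat) (F : ('I_K -> R) -> R) : Prop :=
  forall (d : measure_display) (Om : measurableType d) (P : probability Om R)
         (Pk : 'I_K -> Om -> R),
    (forall k, measurable_fun setT (Pk k)) ->
    (forall k w, 0 <= Pk k w <= 1) ->
    (forall k (a : R), 0 < a < 1 -> (P [set w | (Pk k w <= a)%R] <= a%:E)%E) ->
    forall a : R, 0 < a < 1 -> (P [set w | (F (fun k => Pk k w) <= a)%R] <= a%:E)%E.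

(* The pairs (Xs i, Cs i), i : 'I_m, are i.i.d. random elements of
   (T.-tuple X) x 'I_C : each is measurable, and for every family of
   measurable rectangles A_i x B_i (which generate the product sigma-algebra),
   P(/\_i {(X_i,C_i) in A_i x B_i}) = prod_i P((X_0,C_0) in A_i x B_i)
   (independence + identical distribution). *)
Definition iid_pairs (R : realType) (d : measure_display) (Om : measurableType d)
    (P : probability Om R) (dX : measure_display) (X : measurableType dX)
    (T C m : nat) (Xs : 'I_m.+1 -> Om -> T.-tuple X) (Cs : 'I_m.+1 -> Om -> 'I_C) : Prop :=
  (forall i, measurable_fun setT (Xs i)) /\
  (forall i (c : 'I_C), measurable (Cs i @^-1` [set c])) /\
  (forall (A : 'I_m.+1 -> set (T.-tuple X)) (B : 'I_m.+1 -> set 'I_C),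
     (forall i, measurable (A i)) ->
     P (\bigcap_(i in [set: 'I_m.+1]) [set w | A i (Xs i w) /\ B i (Cs i w)])
     = (\prod_(i < m.+1) P [set w | A i (Xs ord0 w) /\ B i (Cs ord0 w)])%E).

Section SpikeCP.
Variables (R : realType) (dX : measure_display) (X : measurableType dX)
  (T C K n : nat) (s : 'I_K -> 'I_C -> seq X -> R).

Definition pval (k : 'I_K) (c' : 'I_C) (t : nat) (x : T.-tuple X)
    (xs : 'I_n -> T.-tuple X) (cs : 'I_n -> 'I_C) : R :=
  (1 + #|[set i : 'I_n | s k c' (take t x) <= s k (cs i) (take t (xs i))]|)%:R
  / n.+1%:R.

Definition Gamma (F : ('I_K -> R) -> R) (alpha : R) (t : nat) (x : T.-tuple X)
    (xs : 'I_n -> T.-tuple X) (cs : 'I_n -> 'I_C) : {set 'I_C} :=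
  [set c' : 'I_C | alpha < F (fun k => pval k c' t x xs cs)].

Definition stop_time (F : ('I_K -> R) -> R) (alpha : R) (Ts : {set 'I_T.+1})
    (Ith : nat) (x : T.-tuple X) (xs : 'I_n -> T.-tuple X) (cs : 'I_n -> 'I_C)
    : 'I_T.+1 :=
  let A := [set t in Ts | #|Gamma F alpha t x xs cs| <= Ith]%N in
  if [pick t in A] is Some t0 then [arg min_(t < t0 in A) (t : nat)] else ord_max.

Definition spikecp_set (F : ('I_K -> R) -> R) (alpha : R) (Ts : {set 'I_T.+1})
    (Ith : nat) (x : T.-tuple X) (xs : 'I_n -> T.-tuple X) (cs : 'I_n -> 'I_C)
    : {set 'I_C} :=
  Gamma F alpha (stop_time F alpha Ts Ith x xs cs) x xs cs.

End SpikeCP.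

From HB Require Import structures.
From mathcomp Require Import all_boot all_order all_algebra.
From mathcomp Require Import all_classical all_reals all_analysis.
From mathcomp Require Import measurable_realfun.
Set Implicit Arguments. Unset Strict Implicit. Unset Printing Implicit Defensive.
Import Order.TTheory GRing.Theory Num.Theory.
Local Open Scope classical_set_scope.
Local Open Scope ring_scope.

(* For a fixed checkpoint t and model k, the p-value of the true test label is
   (1 + #{i | S_0 <= S_i}) / (n + 1), with S_0 the test score and S_1..S_n the
   calibration scores.  The n + 1 scores are exchangeable, so the events
   {#{i | S_j <= S_i} <= b} all have the same probability, while at most b of
   them can hold at once (the index with the smallest score among them already
   counts all the others); hence the p-value is super-uniform, and so is its
   merge by F.  The true label is missed only if its merged p-value at the
   stopping checkpoint is at most alpha, so a union bound over the |Ts|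
   checkpoints bounds the miss probability by |Ts| alpha = 1 - ptarg.
   Exchangeability follows from [iid_pairs]: the laws of the sample and of its
   reindexed copies agree on measurable rectangles, a pi-system generating the
   product sigma-algebra. *)

Lemma mem_mkset (I : Type) (Q : I -> bool) x : (x \in [set y | Q y]) = Q x.
Proof. by apply/idP/idP => [/set_mem|/mem_set]. Qed.

Lemma card_mkset_inj (I : finType) (f : I -> I) (Q : I -> bool) : injective f ->
  #|[set i | Q (f i)]| = #|[set i | Q i]|.
Proof.
move=> finj; rewrite -!sum1_card [RHS](reindex_inj finj) /=.
by apply: eq_bigl => i; rewrite !mem_mkset.
Qed.

Lemma card_mkset_lift (n : nat) (Q : 'I_n.+1 -> bool) :
  #|[set i : 'I_n.+1 | Q i]| = (Q ord0 + #|[set i : 'I_n | Q (lift ord0 i)]|)%N.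
Proof.
rewrite -!sum1_card !big_mkcond big_ord_recl /= mem_mkset; congr addn.
by rewrite [RHS]big_mkcond; apply: eq_bigr => i _; rewrite !mem_mkset.
Qed.

Lemma card_rank_le (R : realDomainType) (I : finType) (S : I -> R) (b : R) :
  0 <= b -> (#|[set j | (#|[set i | S j <= S i]|)%:R <= b]|)%:R <= b.
Proof.
move=> b_ge0; set J := [set j | _].
have [j0 j0J|J0] := pickP (mem J); last by rewrite (eq_card0 J0).
have [j jJ jmin] := Order.TotalTheory.arg_minP S (P := mem J) j0J.
apply: le_trans (_ : (#|[set i | S j <= S i]|)%:R <= b); last first.
  by move: jJ; rewrite /= in_setE.
rewrite ler_nat; apply: subset_leq_card; apply/fintype.subsetP => i iJ.
by rewrite in_setE; apply: jmin.
Qed.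

Section MeasurableSets.
Context d (T : measurableType d) (R : realType).

Lemma measurable_of_atoms (L : finType) (E : L -> set T) (Q : set T) :
  (forall l, measurable (E l)) ->
  (forall w w', (forall l, E l w <-> E l w') -> Q w -> Q w') -> measurable Q.
Proof.
move=> mE HQ.
have -> : Q = \bigcup_(b in [set b : {ffun L -> bool} |
                                exists w, Q w /\ forall l, E l w <-> b l])
              \bigcap_(l in [set: L]) (if b l then E l else ~` E l).
  apply/seteqP; split.
  - move=> w Qw; exists [ffun l => `[< E l w >]].
      by exists w; split => // l; rewrite ffunE; split => [?|/asboolP]//; exact/asboolP.
    by move=> l _; rewrite ffunE; case: asboolP.
  - move=> w [b [w0 [Qw0 Ew0]] Ew]; apply: (HQ w0) => // l.
    by have := Ew l I; rewrite Ew0; case: (b l) => //= nE; split => // /nE.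
apply: fin_bigcup_measurable; first exact: finite_finset.
move=> b _; apply: fin_bigcap_measurable; first exact: finite_finset.
by move=> l _; case: (b l) => //; exact: measurableC.
Qed.

Lemma measurable_set_le (f g : T -> R) :
  measurable_fun setT f -> measurable_fun setT g -> measurable [set w | f w <= g w].
Proof. by move=> mf mg; rewrite -[X in measurable X]setTI; exact: measurable_fun_le. Qed.

Lemma measurable_fun_finite_case (I : finType) (f : T -> I) (g : I -> T -> R) :
  (forall c, measurable (f @^-1` [set c])) -> (forall c, measurable_fun setT (g c)) ->
  measurable_fun setT (fun w => g (f w) w).
Proof.
move=> mf mg _ B mB; rewrite setTI.
have -> : (fun w => g (f w) w) @^-1` B =
    \bigcup_(c in [set: I]) (f @^-1` [set c] `&` g c @^-1` B).
  apply/seteqP; split => w; first by move=> Bw; exists (f w).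
  by case=> c _ [/= -> ?].
apply: fin_bigcup_measurable; first exact: finite_finset.
move=> c _; apply: measurableI => //.
by have := mg c measurableT B mB; rewrite setTI.
Qed.

End MeasurableSets.

Section FiniteSumsOfMeasures.
Context d (T : measurableType d) (R : realType).
Implicit Types (mu : {measure set T -> \bar R}) (I : finType).

Let measurable_indicE (A : set T) : measurable A ->
  measurable_fun [set: T] (EFin \o (\1_A : T -> R)).
Proof. by move=> mA; apply/measurable_EFinP; exact: measurable_indic. Qed.

Lemma sum_measure_integral_indic mu I (E : I -> set T) :
  (forall j, measurable (E j)) ->
  (\sum_j mu (E j) = \int[mu]_x (\sum_j \1_(E j) x : R)%:E)%E.
Proof.
move=> mE; under eq_integral do rewrite -sumEFin.
rewrite ge0_integral_sum //; last by move=> j; exact: measurable_indicE.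
by apply: eq_bigr => j _; rewrite integral_indic // setIT.
Qed.

Lemma measure_le_sum_cover mu I (E : I -> set T) (A : set T) :
  (forall j, measurable (E j)) -> measurable A ->
  (forall w, A w -> exists j, E j w) -> (mu A <= \sum_j mu (E j))%E.
Proof.
move=> mE mA AE; rewrite sum_measure_integral_indic //.
have -> : mu A = (\int[mu]_x (\1_A x : R)%:E)%E by rewrite integral_indic // setIT.
apply: ge0_le_integral => //; first exact: measurable_indicE.
  by apply/measurable_EFinP; apply: measurable_sum => j; exact: measurable_indic.
move=> x _; rewrite lee_fin.
have [Ax|nAx] := pselect (A x); last first.
  by rewrite indicE memNset // sumr_ge0 // => j _; rewrite indic_ge0.
have [j Ej] := AE x Ax.
rewrite (bigD1 j) //= indicE mem_set // indicE mem_set //.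
by rewrite lerDl sumr_ge0 // => i _; rewrite indic_ge0.
Qed.

Lemma sum_probability_le (P : probability T R) I (E : I -> set T) (b : R) :
  (forall j, measurable (E j)) ->
  (forall w, \sum_j (\1_(E j) w : R) <= b) -> (\sum_j P (E j) <= b%:E)%E.
Proof.
move=> mE Eb; rewrite sum_measure_integral_indic //.
apply: le_trans (_ : (\int[P]_x (cst b%:E x) <= _)%E).
  apply: ge0_le_integral => //.
  - by move=> x _; rewrite lee_fin sumr_ge0 // => j _; rewrite indic_ge0.
  - by apply/measurable_EFinP; apply: measurable_sum => j; exact: measurable_indic.
  - by move=> x _; rewrite lee_fin.
by rewrite integral_cst //= probability_setT mule1.
Qed.

End FiniteSumsOfMeasures.

Section Exchangeability.
Context (R : realType) d (Om : measurableType d) (P : probability Om R)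
  dX (X : measurableType dX) (T C m : nat).

(* Labels are stored in [option 'I_C] only to make [sample] a pointedType, as
   required for the generated sigma-algebra [sampleM]. *)
Definition sample := 'I_m.+1 -> T.-tuple X * option 'I_C.

Definition rectangle (A : 'I_m.+1 -> set (T.-tuple X)) (B : 'I_m.+1 -> set (option 'I_C))
  : set sample := [set y | forall i, A i (y i).1 /\ B i (y i).2].

Definition rectangles : set (set sample) :=
  [set Y | exists A B, (forall i, measurable (A i)) /\ Y = rectangle A B].

Definition sampleM := g_sigma_algebraType rectangles.

Lemma measurable_coordinate i (A : set (T.-tuple X)) (B : set (option 'I_C)) :
  measurable A -> measurable [set y : sampleM | A (y i).1 /\ B (y i).2].
Proof.
move=> mA; apply: sub_sigma_algebra.
exists (fun j => if j == i then A else setT), (fun j => if j == i then B else setT).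
split; first by move=> j; case: ifP.
apply/seteqP; split => y; last by move=> /(_ i); rewrite eqxx.
by move=> [Ay By] j; case: ifP => [/eqP->|].
Qed.

Definition sample_of (Xs : 'I_m.+1 -> Om -> T.-tuple X) (Cs : 'I_m.+1 -> Om -> 'I_C)
  (w : Om) : sampleM := fun i => (Xs i w, Some (Cs i w)).

Lemma measurable_sample_of Xs Cs :
  (forall i, measurable_fun setT (Xs i)) ->
  (forall i c, measurable (Cs i @^-1` [set c])) ->
  measurable_fun setT (sample_of Xs Cs).
Proof.
move=> mX mC; apply: (@measurability _ _ _ sampleM _ _ rectangles) => //.
move=> _ [_ [A [B [mA ->]]] <-]; rewrite setTI.
have -> : sample_of Xs Cs @^-1` rectangle A B = \bigcap_(i in [set: 'I_m.+1])
    (Xs i @^-1` A i `&` \bigcup_(c in [set c | B i (Some c)]) Cs i @^-1` [set c]).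
  apply/seteqP; split => w ABw i.
    by move=> _; have [? ?] := ABw i; split => //; exists (Cs i w).
  by have [? [c ? /= ->]] := ABw i I.
apply: fin_bigcap_measurable; first exact: finite_finset.
move=> i _; apply: measurableI.
  by have := mX i measurableT (A i) (mA i); rewrite setTI.
by apply: fin_bigcup_measurable; [exact: finite_finset|move=> c _; exact: mC].
Qed.

Lemma sample_law_unique Xs Cs Xs' Cs' :
  measurable_fun setT (sample_of Xs Cs) -> measurable_fun setT (sample_of Xs' Cs') ->
  (forall A B, (forall i, measurable (A i)) ->
     P (sample_of Xs Cs @^-1` rectangle A B) =
     P (sample_of Xs' Cs' @^-1` rectangle A B)) ->
  forall Y : set sampleM, measurable Y ->
    P (sample_of Xs Cs @^-1` Y) = P (sample_of Xs' Cs' @^-1` Y).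
Proof.
move=> mS mS' eq_rect Y mY.
have := @measure_unique _ R sampleM rectangles (fun=> setT) erefl _ _ _
  (pushforward P (sample_of Xs Cs)) (pushforward P (sample_of Xs' Cs')) _ _ Y mY.
apply.
- move=> _ _ [A1 [B1 [mA1 ->]]] [A2 [B2 [mA2 ->]]].
  exists (fun i => A1 i `&` A2 i), (fun i => B1 i `&` B2 i).
  split; first by move=> i; exact: measurableI.
  apply/seteqP; split => y.
    by move=> [y1 y2] i; have [? ?] := y1 i; have [? ?] := y2 i.
  by move=> y12; split => i; have [[? ?] [? ?]] := y12 i.
- move=> _; exists (fun=> setT), (fun=> setT); split => //.
  by apply/seteqP; split => y.
- by apply/seteqP; split => // y _; exists 0%N.
- by move=> _ [A [B [mA ->]]]; exact: eq_rect.
- move=> _; change (P (sample_of Xs Cs @^-1` [set: sampleM]) < +oo)%E.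
  rewrite preimage_setT.
  by apply: le_lt_trans (probability_le1 P measurableT) _; exact: ltey.
(* The measure structures of the two pushforwards wait for these proofs. *)
Unshelve. all: by [exact: mS | exact: mS'].
Qed.

Variables (Xs : 'I_m.+1 -> Om -> T.-tuple X) (Cs : 'I_m.+1 -> Om -> 'I_C).
Hypothesis iid : iid_pairs P Xs Cs.

Let mXs : forall i, measurable_fun setT (Xs i). Proof. by case: iid. Qed.
Let mCs : forall i c, measurable (Cs i @^-1` [set c]). Proof. by case: iid => _ []. Qed.

Let measurable_sample : measurable_fun setT (sample_of Xs Cs).
Proof. exact: measurable_sample_of. Qed.

Lemma measure_sample_rectangle A B : (forall i, measurable (A i)) ->
  P (sample_of Xs Cs @^-1` rectangle A B) =
  (\prod_(i < m.+1) P [set w | A i (Xs ord0 w) /\ B i (Some (Cs ord0 w))])%E.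
Proof.
move=> mA; have [_ [_ iidP]] := iid.
rewrite -(iidP A (fun i c => B i (Some c)) mA); congr (P _).
by apply/seteqP; split => w ABw i; [move=> _; exact: ABw | exact: ABw i I].
Qed.

Lemma sample_law_reindex (p : 'I_m.+1 -> 'I_m.+1) (Y : set sampleM) :
  injective p -> measurable Y ->
  P (sample_of (Xs \o p) (Cs \o p) @^-1` Y) = P (sample_of Xs Cs @^-1` Y).
Proof.
move=> p_inj mY; apply: (sample_law_unique _ _ _ mY).
- by apply: measurable_sample_of => [i|i c]; [exact: mXs|exact: mCs].
- exact: measurable_sample.
move=> A B mA; rewrite measure_sample_rectangle //.
pose q := invF p_inj.
have -> : sample_of (Xs \o p) (Cs \o p) @^-1` rectangle A B =
          sample_of Xs Cs @^-1` rectangle (A \o q) (B \o q).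
  apply/seteqP; split => w ABw i; first by have := ABw (q i); rewrite /= /q f_invF.
  by have := ABw (p i); rewrite /= /q invF_f.
rewrite measure_sample_rectangle; last by move=> i; exact: mA.
by rewrite [RHS](reindex_inj (can_inj (f_invF p_inj))).
Qed.

Variables (h : 'I_C -> T.-tuple X -> R).
Hypothesis h_meas : forall c, measurable_fun setT (h c).

Definition score i (y : sampleM) : R :=
  if (y i).2 is Some c then h c (y i).1 else 0.

Lemma measurable_score i : measurable_fun setT (score i).
Proof.
pose g o (y : sampleM) := if o is Some c then h c (y i).1 else 0.
apply: (measurable_fun_finite_case (f := fun y : sampleM => (y i).2) (g := g)).
  move=> o; rewrite (_ : _ @^-1` _ = [set y | setT (y i).1 /\ [set o] (y i).2]).
    exact: measurable_coordinate.
  by apply/seteqP; split => y /= oy; [split | move: oy => [_ ->]].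
case=> [c|]; last exact: measurable_cst.
apply: measurableT_comp (h_meas c) _ => _ A mA; rewrite setTI.
rewrite (_ : _ @^-1` _ = [set y | A (y i).1 /\ setT (y i).2]).
  exact: measurable_coordinate.
by apply/seteqP; split => y /= Ay; [split | move: Ay => []].
Qed.

Definition rank_event j (b : R) : set sampleM :=
  [set y | (#|[set i | score j y <= score i y]|)%:R <= b].

Lemma measurable_rank_event j b : measurable (rank_event j b).
Proof.
apply: (measurable_of_atoms (E := fun l => [set y | score j y <= score l y])).
  by move=> l; apply: measurable_set_le; exact: measurable_score.
move=> y y' yy'; rewrite /rank_event /=.
suff -> : [set i | score j y' <= score i y'] = [set i | score j y <= score i y] by [].
by apply/seteqP; split => i /= /yy'.
Qed.

Lemma rank_event_exchangeable j b :
  P (sample_of Xs Cs @^-1` rank_event j b) = P (sample_of Xs Cs @^-1` rank_event ord0 b).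
Proof.
(* Reindex by the cyclic shift i |-> i + j of 'I_m.+1, which sends 0 to j. *)
have shift_inj : injective (fun i : 'I_m.+1 => i + j) by exact: addIr.
rewrite -(sample_law_reindex shift_inj (measurable_rank_event ord0 b)).
congr (P _); apply/seteqP; split => w;
  rewrite /preimage /rank_event /score /sample_of /= add0r;
  by rewrite (card_mkset_inj
    (fun i => h (Cs j w) (Xs j w) <= h (Cs i w) (Xs i w)) shift_inj).
Qed.

Lemma conformal_rank_valid (a : R) : 0 <= a ->
  (P [set w | (#|[set i | h (Cs ord0 w) (Xs ord0 w) <= h (Cs i w) (Xs i w)]|)%:R
              <= a * m.+1%:R]%R <= a%:E)%E.
Proof.
move=> a_ge0; set b := a * m.+1%:R.
pose E j := sample_of Xs Cs @^-1` rank_event j b.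
have mE j : measurable (E j).
  by have := measurable_sample measurableT (measurable_rank_event j b); rewrite setTI.
have sum_indic w : let y := sample_of Xs Cs w in
    \sum_j (\1_(E j) w : R) =
    (#|[set j | (#|[set i | score j y <= score i y]|)%:R <= b]|)%:R.
  rewrite /= -sum1_card natr_sum [RHS]big_mkcond /=; apply: eq_bigr => j _.
  by rewrite indicE !mem_mkset; case: (_ <= b).
have sumE : (\sum_j P (E j) <= b%:E)%E.
  apply: sum_probability_le => // w; rewrite sum_indic.
  by apply: card_rank_le; rewrite mulr_ge0.
have sumPE : (\sum_j P (E j) = P (E ord0) *+ m.+1)%E.
  by rewrite (eq_bigr _ (fun j _ => rank_event_exchangeable j b)) sumr_const card_ord.
rewrite sumPE in sumE.
rewrite (_ : [set w | _] = E ord0); last by apply/seteqP; split => w Ew; exact: Ew.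
have fin : P (E ord0) \is a fin_num.
  by rewrite ge0_fin_numE // (le_lt_trans (probability_le1 P (mE ord0))) // ltey.
by move: sumE; rewrite -(fineK fin) -EFin_natmul !lee_fin -mulr_natr /b ler_pM2r.
Qed.

End Exchangeability.

Section PredictionSets.
Variables (R : realType) (dX : measure_display) (X : measurableType dX)
  (T C K n : nat) (s : 'I_K -> 'I_C -> seq X -> R)
  (F : ('I_K -> R) -> R) (alpha : R).
Implicit Types (x : T.-tuple X) (xs : 'I_n -> T.-tuple X) (cs : 'I_n -> 'I_C).

Lemma pval_in01 k c t x xs cs : 0 <= pval s k c t x xs cs <= 1.
Proof.
rewrite /pval divr_ge0 ?ler0n //= ler_pdivrMr ?ltr0Sn // mul1r ler_nat add1n ltnS.
by apply: leq_trans (max_card _) _; rewrite card_ord.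
Qed.

Lemma spikecp_set_ext x xs cs x' xs' cs' (Ts : {set 'I_T.+1}) Ith :
  (forall k c (t : 'I_T.+1), pval s k c t x xs cs = pval s k c t x' xs' cs') ->
  spikecp_set s F alpha Ts Ith x xs cs = spikecp_set s F alpha Ts Ith x' xs' cs'.
Proof.
move=> eq_pval.
have eq_Gamma (t : 'I_T.+1) : Gamma s F alpha t x xs cs = Gamma s F alpha t x' xs' cs'.
  by apply/setP => c; rewrite !inE; congr (_ < F _); apply/funext => k; exact: eq_pval.
rewrite /spikecp_set /stop_time.
have -> : [set t in Ts | (#|Gamma s F alpha t x xs cs| <= Ith)%N] =
          [set t in Ts | (#|Gamma s F alpha t x' xs' cs'| <= Ith)%N].
  by apply/setP => t; rewrite !inE eq_Gamma.
by case: pickP => [t0 _|_]; rewrite eq_Gamma.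
Qed.

Lemma stop_time_in x xs cs (Ts : {set 'I_T.+1}) Ith :
  ord_max \in Ts -> stop_time s F alpha Ts Ith x xs cs \in Ts.
Proof.
move=> Ts_max; rewrite /stop_time; case: pickP => [t0 t0A|//].
by case: arg_minnP => // t; rewrite inE => /andP[].
Qed.

Lemma notin_spikecp_set x xs cs (Ts : {set 'I_T.+1}) Ith c :
  ord_max \in Ts -> c \notin spikecp_set s F alpha Ts Ith x xs cs ->
  exists2 t, t \in Ts & F (fun k => pval s k c t x xs cs) <= alpha.
Proof.
move=> Ts_max; rewrite /spikecp_set /Gamma inE -leNgt => Fle.
by exists (stop_time s F alpha Ts Ith x xs cs); first exact: stop_time_in.
Qed.

End PredictionSets.

Section SpikeCPValidity.
Variables (R : realType) (d : measure_display) (Om : measurableType d)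
  (P : probability Om R) (dX : measure_display) (X : measurableType dX)
  (T C K n : nat) (Xs : 'I_n.+1 -> Om -> T.-tuple X) (Cs : 'I_n.+1 -> Om -> 'I_C)
  (s : 'I_K -> 'I_C -> seq X -> R).
Hypotheses (iid : iid_pairs P Xs Cs)
  (s_meas : forall k c (t : nat),
     measurable_fun setT (fun x : T.-tuple X => s k c (take t x))).

Let mXs : forall i, measurable_fun setT (Xs i). Proof. by case: iid. Qed.
Let mCs : forall i c, measurable (Cs i @^-1` [set c]). Proof. by case: iid => _ []. Qed.

Definition test_pval k c (t : nat) w : R :=
  pval s k c t (Xs ord0 w) (fun i => Xs (lift ord0 i) w) (fun i => Cs (lift ord0 i) w).

Lemma measurable_score_le k c (t : nat) i : measurable
  [set w | s k c (take t (Xs ord0 w)) <= s k (Cs i w) (take t (Xs i w))].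
Proof.
apply: measurable_set_le; first exact: measurableT_comp (s_meas k c t) (mXs ord0).
apply: (measurable_fun_finite_case (f := Cs i) (g := fun c' w => s k c' (take t (Xs i w))))
  => // c'.
exact: measurableT_comp (s_meas k c' t) (mXs i).
Qed.

(* The test p-values and the true test label are functions of finitely many
   score comparisons, so every event they determine is measurable. *)
Lemma measurable_test_pval_invariant (Q : set Om) :
  (forall w w', (forall k c (t : 'I_T.+1), test_pval k c t w = test_pval k c t w') ->
     Cs ord0 w = Cs ord0 w' -> Q w -> Q w') -> measurable Q.
Proof.
move=> invQ.
pose E (l : ((('I_K * 'I_C) * 'I_T.+1) * 'I_n + 'I_C)%type) : set Om :=
  match l with
  | inl (((k, c), t), i) =>
      [set w | s k c (take t (Xs ord0 w)) <=
               s k (Cs (lift ord0 i) w) (take t (Xs (lift ord0 i) w))]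
  | inr c => Cs ord0 @^-1` [set c]
  end.
apply: (measurable_of_atoms (E := E)) => [[[[[k c] t] i]|c]|w w' Eww'].
- exact: measurable_score_le.
- exact: mCs.
apply: invQ => [k c t|].
  rewrite /test_pval /pval; congr ((1 + _)%:R / _); apply: eq_card => i.
  rewrite !mem_mkset; have [E1 E2] := Eww' (inl (k, c, t, i)).
  by apply/idP/idP; [exact: E1 | exact: E2].
by have [E1 _] := Eww' (inr (Cs ord0 w)); exact/esym/E1.
Qed.

Lemma measurable_test_pval_true k (t : 'I_T.+1) :
  measurable_fun setT (fun w => test_pval k (Cs ord0 w) t w).
Proof.
move=> _ B mB; rewrite setTI; apply: measurable_test_pval_invariant => w w' eqp eqc.
by rewrite /preimage /= -eqc -eqp.
Qed.

Lemma test_pval_true_superuniform k (t : nat) (a : R) : 0 <= a ->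
  (P [set w | test_pval k (Cs ord0 w) t w <= a]%R <= a%:E)%E.
Proof.
move=> a_ge0.
have := conformal_rank_valid iid (h := fun c x => s k c (take t x)) (s_meas k ^~ t) a_ge0.
apply: le_trans; rewrite le_eqVlt; apply/orP; left; apply/eqP; congr (P _).
by apply/seteqP; split => w;
  rewrite /= /test_pval /pval ler_pdivrMr ?ltr0Sn // card_mkset_lift lexx.
Qed.

Lemma merged_test_pval_superuniform F (t : 'I_T.+1) alpha :
  is_pmerging F -> 0 < alpha < 1 ->
  (P [set w | F (fun k => test_pval k (Cs ord0 w) t w) <= alpha]%R <= alpha%:E)%E.
Proof.
move=> pmF alpha01.
apply: (pmF _ _ P (fun k w => test_pval k (Cs ord0 w) t w) _ _ _ alpha alpha01).
- by move=> k; exact: measurable_test_pval_true.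
- by move=> k w; exact: pval_in01.
- by move=> k a /andP[a_gt0 _]; apply: test_pval_true_superuniform; exact: ltW.
Qed.

Lemma measurable_spikecp_event F alpha (Ts : {set 'I_T.+1}) Ith
    (Q : 'I_C -> {set 'I_C} -> Prop) :
  measurable [set w | Q (Cs ord0 w) (spikecp_set s F alpha Ts Ith (Xs ord0 w)
                        (fun i => Xs (lift ord0 i) w) (fun i => Cs (lift ord0 i) w))].
Proof.
apply: measurable_test_pval_invariant => w w' eqp eqc.
by rewrite /= -eqc (spikecp_set_ext _ _ _ _ eqp).
Qed.

Lemma spikecp_miss_le F (Ts : {set 'I_T.+1}) Ith alpha :
  is_pmerging F -> ord_max \in Ts -> 0 < alpha < 1 ->
  (P [set w | Cs ord0 w \notin spikecp_set s F alpha Ts Ith (Xs ord0 w)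
       (fun i => Xs (lift ord0 i) w) (fun i => Cs (lift ord0 i) w)]
   <= (#|Ts|%:R * alpha)%:E)%E.
Proof.
move=> pmF Ts_max alpha01; set miss := [set w | _].
pose U (t : 'I_T.+1) :=
  [set w | t \in Ts /\ F (fun k => test_pval k (Cs ord0 w) t w) <= alpha].
have mU t : measurable (U t).
  apply: measurable_test_pval_invariant => w w' eqp eqc [tTs Fle]; split => //.
  by rewrite -eqc; under eq_fun do rewrite -eqp.
have cover w : miss w -> exists t, U t w.
  by move=> /(notin_spikecp_set Ts_max) [t tTs Fle]; exists t.
have mmiss : measurable miss.
  exact: (measurable_spikecp_event _ _ _ _ (fun c G => c \notin G)).
apply: le_trans (measure_le_sum_cover P mU mmiss cover) _.
apply: le_trans (_ : \sum_(t < T.+1) (if t \in Ts then alpha%:E else 0) <= _)%E.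
  apply: lee_sum => t _; case: ifPn => tTs.
    apply: le_trans (merged_test_pval_superuniform t pmF alpha01).
    rewrite le_eqVlt; apply/orP; left; apply/eqP; congr (P _).
    by apply/seteqP; split => w /=; [case | split].
  rewrite (_ : U t = set0) ?measure0 //; apply/seteqP; split; last exact: sub0set.
  by move=> w [tTs' _]; rewrite tTs' in tTs.
by rewrite -big_mkcond /= sumEFin sumr_const mulr_natl.
Qed.

Lemma spikecp_coverage_ge F (Ts : {set 'I_T.+1}) Ith alpha :
  is_pmerging F -> ord_max \in Ts -> 0 < alpha < 1 ->
  ((1 - #|Ts|%:R * alpha)%:E <=
   P [set w | Cs ord0 w \in spikecp_set s F alpha Ts Ith (Xs ord0 w)
                (fun i => Xs (lift ord0 i) w) (fun i => Cs (lift ord0 i) w)])%E.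
Proof.
move=> pmF Ts_max alpha01.
rewrite -[X in (_ <= P X)%E]setCK probability_setC; last first.
  by apply: measurableC; exact: (measurable_spikecp_event _ _ _ _ (fun c G => c \in G)).
rewrite EFinB; apply: leeB => //; apply: le_trans (spikecp_miss_le Ith pmF Ts_max alpha01).
rewrite le_eqVlt; apply/orP; left; apply/eqP; congr (P _).
by apply/seteqP; split => w /negP.
Qed.

End SpikeCPValidity.

Theorem mainTheorem2 (R : realType) (d : measure_display) (Om : measurableType d)
  (P : probability Om R) (dX : measure_display) (X : measurableType dX)
  (T C K n : nat)
  (Xs : 'I_n.+1 -> Om -> T.-tuple X) (Cs : 'I_n.+1 -> Om -> 'I_C)
  (s : 'I_K -> 'I_C -> seq X -> R)
  (F : ('I_K -> R) -> R) (Ts : {set 'I_T.+1}) (ptarg : R) (Ith : nat) :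
  iid_pairs P Xs Cs ->
  (forall k c (t : nat), measurable_fun setT (fun x : T.-tuple X => s k c (take t x))) ->
  is_pmerging F ->
  (forall t, t \in Ts -> (0 < (t : nat))%N) ->
  ord_max \in Ts ->
  0 < ptarg < 1 ->
  let alpha := (1 - ptarg) / #|Ts|%:R in
  (ptarg%:E <=
   P [set w | Cs ord0 w \in
        spikecp_set s F alpha Ts Ith (Xs ord0 w)
          (fun i => Xs (lift ord0 i) w) (fun i => Cs (lift ord0 i) w)])%E.
Proof.
move=> iid s_meas pmF _ Ts_max /andP[ptarg_gt0 ptarg_lt1].
cbv zeta; set alpha := (1 - ptarg) / _.
have card_gt0 : 0 < #|Ts|%:R :> R by rewrite ltr0n card_gt0; apply/set0Pn; exists ord_max.
have alpha01 : 0 < alpha < 1.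
  rewrite /alpha divr_gt0 ?subr_gt0 //= ltr_pdivrMr // mul1r.
  by apply: lt_le_trans (_ : 1 <= _); [rewrite ltrBlDr ltrDl | rewrite ler1n -(ltr0n R)].
have card_alpha : #|Ts|%:R * alpha = 1 - ptarg by rewrite /alpha mulrC divfK ?gt_eqF.
have := spikecp_coverage_ge iid s_meas Ith pmF Ts_max alpha01.
by rewrite card_alpha subKr.
Qed.
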